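(* Let $A$ be an AUF algebra, $B$ a unital algebra, and $M$ an $A$-$B$ bimodule that is coherent and projective as a left $A$-module. Let $p\in B$ be an idempotent and $\psi\in\mathrm{SLF}(A)$. Let ${}^\psi\mathrm{Tr}_M:B\to\mathbb C$ be the right pseudotrace associated to $M$, and ${}^\psi\mathrm{Tr}_{Mp}:pBp\to\mathbb C$ the right pseudotrace associated to the $A$-$(pBp)$ bimodule $Mp$. Then ${}^\psi\mathrm{Tr}_{Mp}={}^\psi\mathrm{Tr}_M|_{pBp}$.
   Context: All algebras are associative $\mathbb C$-algebras, not necessarily unital. An idempotent is $e$ with $e^2=e$. An algebra $A$ is AUF if there is a family $(e_i)_{i\in\mathfrak I}$ of mutually orthogonal idempotents with $\dim e_iAe_j<\infty$ and $A=\sum_{i,j}e_iAe_j$. A left $A$-module is quasicoherent if $\xi\in A\xi$ for all $\xi$, coherent if moreover finitely generated. $\mathrm{SLF}(C)$ is the space of linear $\phi:C\to\mathbb C$ with $\phi(xy)=\phi(yx)$. $Mp=\{\xi p:\xi\in M\}$, a left $A$-submodule and direct summand of $M$, with right action of the unital algebra $pBp$. For an $A$-$B'$ bimodule $N$ ($B'$ unital) that is coherent and projective as a left $A$-module, a right coordinate system is an idempotent $e\in A$ with finitely many left $A$-module maps $\beta_j:Ae\to N$, $\check\beta^j:N\to Ae$ such that $\sum_j\beta_j\circ\check\beta^j=\mathrm{id}_N$ (one exists), and the right pseudotrace is ${}^\psi\mathrm{Tr}_N(y)=\sum_j\psi(\check\beta^j(\beta_j(e)y))$ for $y\in B'$,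 independent of the choice. *)

From HB Require Import structures.
From mathcomp Require Import all_boot all_order all_algebra.
From mathcomp Require Import reals.
From mathcomp Require Import complex.
Set Implicit Arguments. Unset Strict Implicit. Unset Printing Implicit Defensive.
Import Order.TTheory GRing.Theory Num.Theory.
Local Open Scope ring_scope.

Section Defs.
Variable (R : realType).
Local Notation C := (complex R).

Definition nu_alg (A : lmodType C) (mulA : A -> A -> A) : Prop :=
  (forall x y z, mulA x (mulA y z) = mulA (mulA x y) z) /\
  (forall (c : C) x y z, mulA (c *: x + y) z = c *: mulA x z + mulA y z) /\
  (forall (c : C) x y z, mulA z (c *: x + y) = c *: mulA z x + mulA z y).

Definition fin_dim_subspace (A : lmodType C) (V : A -> Prop) : Prop :=
  exists (n : nat) (v : 'I_n -> A),
    forall x, V x <-> exists c : 'I_n -> C, x = \sum_(k < n) c k *: v k.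

Definition is_AUF (A : lmodType C) (mulA : A -> A -> A) : Prop :=
  exists (I : Type) (e : I -> A),
    (forall i, mulA (e i) (e i) = e i) /\
    (forall i j, i <> j -> mulA (e i) (e j) = 0) /\
    (forall i j, fin_dim_subspace
                   (fun x => exists a, x = mulA (mulA (e i) a) (e j))) /\
    (forall a : A, exists (n : nat) (i j : 'I_n -> I) (x : 'I_n -> A),
        a = \sum_(k < n) mulA (mulA (e (i k)) (x k)) (e (j k))).

Definition SLF (A : lmodType C) (mulA : A -> A -> A) (psi : A -> C) : Prop :=
  (forall (c : C) x y, psi (c *: x + y) = c * psi x + psi y) /\
  (forall x y, psi (mulA x y) = psi (mulA y x)).

Definition lmod_act (A : lmodType C) (mulA : A -> A -> A)
    (X : lmodType C) (act : A -> X -> X) : Prop :=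
  (forall a b x, act (mulA a b) x = act a (act b x)) /\
  (forall (c : C) a b x, act (c *: a + b) x = c *: act a x + act b x) /\
  (forall (c : C) a x y, act a (c *: x + y) = c *: act a x + act a y).

Definition rmod_act (B : algType C) (X : lmodType C) (ract : X -> B -> X) : Prop :=
  (forall x, ract x 1 = x) /\
  (forall x b b', ract (ract x b) b' = ract x (b * b')) /\
  (forall (c : C) x b b', ract x (c *: b + b') = c *: ract x b + ract x b') /\
  (forall (c : C) x y b, ract (c *: x + y) b = c *: ract x b + ract y b).

Definition bimod (A : lmodType C) (mulA : A -> A -> A) (B : algType C)
    (X : lmodType C) (act : A -> X -> X) (ract : X -> B -> X) : Prop :=
  lmod_act mulA act /\ rmod_act ract /\
  (forall a x b, act a (ract x b) = ract (act a x) b).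

Definition Ahom (A : lmodType C) (X Y : lmodType C)
    (actX : A -> X -> X) (actY : A -> Y -> Y) (f : X -> Y) : Prop :=
  (forall (c : C) x y, f (c *: x + y) = c *: f x + f y) /\
  (forall a x, f (actX a x) = actY a (f x)).

Definition quasicoherent (A : lmodType C) (X : lmodType C)
    (act : A -> X -> X) : Prop :=
  forall x, exists a, act a x = x.

Definition fin_gen (A : lmodType C) (X : lmodType C) (act : A -> X -> X) : Prop :=
  exists (n : nat) (g : 'I_n -> X), forall x, exists (a : 'I_n -> A) (c : 'I_n -> C),
    x = \sum_(k < n) (act (a k) (g k) + c k *: g k).

Definition coherent (A : lmodType C) (X : lmodType C) (act : A -> X -> X) : Prop :=
  quasicoherent act /\ fin_gen act.

Definition projective (A : lmodType C) (mulA : A -> A -> A)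
    (X : lmodType C) (act : A -> X -> X) : Prop :=
  forall (Y Z : lmodType C) (actY : A -> Y -> Y) (actZ : A -> Z -> Z)
         (f : Y -> Z) (g : X -> Z),
    lmod_act mulA actY -> lmod_act mulA actZ ->
    Ahom actY actZ f -> (forall z, exists y, f y = z) -> Ahom act actZ g ->
    exists h : X -> Y, Ahom act actY h /\ forall x, f (h x) = g x.

Definition inAe (A : lmodType C) (mulA : A -> A -> A) (e x : A) : Prop :=
  exists a, x = mulA a e.

(* A right coordinate system of a left A-submodule N of M, N given by its
   carrier predicate inN: an idempotent e, and left A-module maps
   bet_j : Ae -> N, chk_j : N -> Ae (j < n), with sum_j bet_j o chk_j = id_N.
   The maps are represented by functions on the ambient spaces A and M; only
   their restrictions to Ae resp. N matter. *)
Definition rcoord (A : lmodType C) (mulA : A -> A -> A)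
    (M : lmodType C) (act : A -> M -> M) (inN : M -> Prop)
    (e : A) (n : nat) (bet : 'I_n -> A -> M) (chk : 'I_n -> M -> A) : Prop :=
  mulA e e = e /\
  (forall j x, inAe mulA e x -> inN (bet j x)) /\
  (forall j (c : C) x y, inAe mulA e x -> inAe mulA e y ->
      bet j (c *: x + y) = c *: bet j x + bet j y) /\
  (forall j a x, inAe mulA e x -> bet j (mulA a x) = act a (bet j x)) /\
  (forall j m, inN m -> inAe mulA e (chk j m)) /\
  (forall j (c : C) m m', inN m -> inN m' ->
      chk j (c *: m + m') = c *: chk j m + chk j m') /\
  (forall j a m, inN m -> chk j (act a m) = mulA a (chk j m)) /\
  (forall m, inN m -> \sum_(j < n) bet j (chk j m) = m).

Definition rpseudotrace (A : lmodType C) (B : algType C) (M : lmodType C)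
    (ract : M -> B -> M) (psi : A -> C)
    (e : A) (n : nat) (bet : 'I_n -> A -> M) (chk : 'I_n -> M -> A) (y : B) : C :=
  \sum_(j < n) psi (chk j (ract (bet j e) y)).

Definition inMp (B : algType C) (M : lmodType C) (ract : M -> B -> M) (p : B)
    (m : M) : Prop := exists m', m = ract m' p.

Definition in_pBp (B : algType C) (p y : B) : Prop := exists b, y = p * b * p.

End Defs.

From HB Require Import structures.
From mathcomp Require Import all_boot all_order all_algebra.
From mathcomp Require Import reals.
From mathcomp Require Import complex.
Import GRing.Theory.
Local Open Scope ring_scope.

(* Pseudotraces are cyclic: for A-module maps f : N -> N' and g : N' -> N
   between modules with right coordinate systems, Tr_N (g f) = Tr_N' (f g).
   Expanding f(beta_i e) in the coordinates of N' and g(beta'_j e') in those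
   of N, both sides become sum_(i,j) psi of a product of the two coordinates
   chk'_j (f (beta_i e)) and chk_i (g (beta'_j e')), taken in opposite orders;
   symmetry of psi identifies them.  The proposition is the case where f is
   right multiplication by y, from M to Mp (as y = p y p), and g is the
   inclusion of Mp into M. *)

Definition add_closed {X : zmodType} (P : X -> Prop) : Prop :=
  P 0 /\ forall x y, P x -> P y -> P (x + y).

Definition lin_on {K : pzRingType} {X Y : lmodType K} (P : X -> Prop)
    (f : X -> Y) : Prop :=
  forall c x y, P x -> P y -> f (c *: x + y) = c *: f x + f y.

Section LinearOn.

Context {K : pzRingType} {X Y : lmodType K} {P : X -> Prop} {f : X -> Y}.
Hypothesis f_lin : lin_on P f.

Lemma lin_on0 : P 0 -> f 0 = 0.
Proof.
move=> P0; have := f_lin (-1) _ _ P0 P0.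
by rewrite scaler0 addr0 scaleN1r addNr.
Qed.

Lemma lin_onD {x y} : P x -> P y -> f (x + y) = f x + f y.
Proof. by move=> Px Py; have := f_lin 1 _ _ Px Py; rewrite !scale1r. Qed.

Lemma lin_on_sum {n} {F : 'I_n -> X} :
  add_closed P -> (forall i, P (F i)) ->
  f (\sum_(i < n) F i) = \sum_(i < n) f (F i).
Proof.
move=> [P0 PD] PF.
suff : P (\sum_(i < n) F i) /\ f (\sum_(i < n) F i) = \sum_(i < n) f (F i).
  by case.
apply: (big_ind2 (fun a b => P a /\ f a = b)) => [|a1 a2 b1 b2|//].
  by split; last exact: lin_on0.
by move=> [P1 <-] [P2 <-]; split; [exact: PD | exact: lin_onD].
Qed.

End LinearOn.

Lemma lin_sum {K : pzRingType} {X Y : lmodType K} {f : X -> Y} :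
  (forall c x y, f (c *: x + y) = c *: f x + f y) ->
  forall n (F : 'I_n -> X), f (\sum_(i < n) F i) = \sum_(i < n) f (F i).
Proof. by move=> f_lin n F; apply: (lin_on_sum (P := fun=> True)). Qed.

Section Pseudotrace.

Variable R : realType.
Local Notation C := (complex R).

Variables (A : lmodType C) (mulA : A -> A -> A) (M : lmodType C).
Variables (act : A -> M -> M) (psi : A -> C).

Hypothesis mulA_assoc : forall x y z, mulA x (mulA y z) = mulA (mulA x y) z.
Hypothesis psi_lin : forall c x y, psi (c *: x + y) = c * psi x + psi y.
Hypothesis psi_sym : forall x y, psi (mulA x y) = psi (mulA y x).

Definition pseudotrace (e : A) {n : nat} (bet : 'I_n -> A -> M)
    (chk : 'I_n -> M -> A) (f : M -> M) : C :=
  \sum_(j < n) psi (chk j (f (bet j e))).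

Lemma psi_sum n (F : 'I_n -> A) :
  psi (\sum_(i < n) F i) = \sum_(i < n) psi (F i).
Proof. exact: (lin_sum (Y := C^o) psi_lin). Qed.

Lemma rcoord_bet_Ae {inN : M -> Prop} {e n} {bet : 'I_n -> A -> M}
    {chk : 'I_n -> M -> A} {j x} :
  rcoord mulA act inN e bet chk -> inAe mulA e x -> bet j x = act x (bet j e).
Proof.
move=> [e_idem [_ [_ [bet_act _]]]] [a ->].
by rewrite -{1}e_idem mulA_assoc bet_act //; exists e; rewrite e_idem.
Qed.

Lemma pseudotrace_comp {inN inN' : M -> Prop} {e e' n n'}
    {bet : 'I_n -> A -> M} {chk : 'I_n -> M -> A}
    {bet' : 'I_n' -> A -> M} {chk' : 'I_n' -> M -> A} {f g : M -> M} :
  rcoord mulA act inN e bet chk -> rcoord mulA act inN' e' bet' chk' ->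
  add_closed inN -> Ahom act act g ->
  (forall m, inN m -> inN' (f m)) -> (forall m, inN' m -> inN (g m)) ->
  pseudotrace e bet chk (g \o f) =
  \sum_(i < n) \sum_(j < n')
     psi (mulA (chk' j (f (bet i e))) (chk i (g (bet' j e')))).
Proof.
move=> [e_idem [betN [_ [_ [_ [chk_lin [chk_act _]]]]]]] cs' N_add [g_lin g_act]
  fNN' gN'N.
have [e_idem' [betN' [_ [_ [chkAe' [_ [_ chk_sum']]]]]]] := cs'.
apply: eq_bigr => i _ /=.
have m_N' : inN' (f (bet i e)) by apply/fNN'/betN; exists e; rewrite e_idem.
rewrite -{1}(chk_sum' _ m_N') (lin_sum g_lin) (lin_on_sum (chk_lin i) N_add);
  last by move=> j; apply/gN'N/betN'/chkAe'.
rewrite psi_sum; apply: eq_bigr => j _.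
rewrite [bet' j _](rcoord_bet_Ae cs' (chkAe' _ _ m_N')).
by rewrite g_act chk_act //; apply/gN'N/betN'; exists e'; rewrite e_idem'.
Qed.

Lemma pseudotrace_compC {inN inN' : M -> Prop} {e e' n n'}
    {bet : 'I_n -> A -> M} {chk : 'I_n -> M -> A}
    {bet' : 'I_n' -> A -> M} {chk' : 'I_n' -> M -> A} (f g : M -> M) :
  rcoord mulA act inN e bet chk -> rcoord mulA act inN' e' bet' chk' ->
  add_closed inN -> add_closed inN' -> Ahom act act f -> Ahom act act g ->
  (forall m, inN m -> inN' (f m)) -> (forall m, inN' m -> inN (g m)) ->
  pseudotrace e bet chk (g \o f) = pseudotrace e' bet' chk' (f \o g).
Proof.
move=> cs cs' N_add N'_add f_hom g_hom fNN' gN'N.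
rewrite (pseudotrace_comp cs cs') // (pseudotrace_comp cs' cs) // exchange_big.
by apply: eq_bigr => j _; apply: eq_bigr => i _; rewrite psi_sym.
Qed.

End Pseudotrace.

Arguments pseudotrace_compC {R A mulA M act psi} _ _ _
  {inN inN' e e' n n' bet chk bet' chk'}.

Lemma add_closed_inMp (R : realType) (B : algType (complex R))
    (M : lmodType (complex R)) (ract : M -> B -> M) (p : B) :
  lin_on (fun _ => True) (ract^~ p) -> add_closed (inMp ract p).
Proof.
move=> ract_lin; split; first by exists 0; rewrite (lin_on0 ract_lin).
by move=> _ _ [x ->] [y ->]; exists (x + y); rewrite (lin_onD ract_lin).
Qed.

Theorem proposition8p8 (R : realType)
    (A : lmodType (complex R)) (mulA : A -> A -> A)
    (B : algType (complex R))
    (M : lmodType (complex R)) (act : A -> M -> M) (ract : M -> B -> M)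
    (p : B) (psi : A -> complex R) :
  nu_alg mulA -> is_AUF mulA ->
  bimod mulA act ract ->
  coherent act -> projective mulA act ->
  p * p = p ->
  SLF mulA psi ->
  forall (e : A) (n : nat) (bet : 'I_n -> A -> M) (chk : 'I_n -> M -> A),
  rcoord mulA act (fun _ => True) e bet chk ->
  forall (e' : A) (n' : nat) (bet' : 'I_n' -> A -> M) (chk' : 'I_n' -> M -> A),
  rcoord mulA act (inMp ract p) e' bet' chk' ->
  forall y : B, in_pBp p y ->
    rpseudotrace ract psi e' bet' chk' y = rpseudotrace ract psi e bet chk y.
Proof.
(* The AUF, coherence, projectivity and idempotency hypotheses only ensure
   that coordinate systems exist; the identity holds for any given ones. *)
move=> [mulA_assoc _] _ [_ [[_ [ract_mul [_ ract_lin]]] act_ract]] _ _ _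
  [psi_lin psi_sym] e n bet chk cs e' n' bet' chk' cs' y [b y_pbp].
have rmul_hom : Ahom act act (ract^~ y).
  by split=> [c x z|a x]; rewrite ?ract_lin ?act_ract.
have rmul_Mp m : inMp ract p (ract m y).
  by exists (ract m (p * b)); rewrite ract_mul y_pbp.
symmetry.
apply: (pseudotrace_compC mulA_assoc psi_lin psi_sym (ract^~ y) id cs cs')
  => //.
by apply: add_closed_inMp => c x z _ _; apply: ract_lin.
Qed.
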